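(* Let $\mathbb V$ be a Schubert representation of $\widehat H_n$ with generic Schubert classes $\{\mathcal Y_w\}$ and evaluation map $\operatorname{ev}$. For $u,v\in S_n$, $\operatorname{ev}(\overline T_u\cdot\mathcal Y_v)=\operatorname{ev}(\mathcal Y_{\mathrm{id}})$ if $u=v$ and $=0$ otherwise. Moreover, for every $\mathcal Y\in\mathbb V$, $$\mathcal Y=\frac{1}{\operatorname{ev}(\mathcal Y_{\mathrm{id}})}\sum_{w\in S_n}\operatorname{ev}(\overline T_w\cdot\mathcal Y)\,\mathcal Y_w.$$
   Context: $\mathcal A_\hbar=\mathbb Q[p,q,\hbar]$. The affine Hecke algebra $\widehat H_n$ over $\mathcal A_\hbar$ is generated by $T_1,\dots,T_{n-1}$, $x_1,\dots,x_n$ with relations $(T_i+p)(T_i-q)=0$, the braid relations $T_iT_j=T_jT_i$ ($|i-j|>1$), $T_iT_{i+1}T_i=T_{i+1}T_iT_{i+1}$, $x_ix_j=x_jx_i$, $T_ix_j=x_jT_i$ ($j\ne i,i+1$), $T_ix_i=x_{i+1}T_i+(\hbar-(p-q)x_i)$, $T_ix_{i+1}=x_iT_i-(\hbar-(p-q)x_i)$. For a reduced word $w=s_{i_1}\cdots s_{i_\ell}$, $T_w=T_{i_1}\cdots T_{i_\ell}$, and $\overline T_w=\overline T_{i_1}\cdots\overline T_{i_\ell}$ with $\overline T_i=T_i+p-q$. A Schubert representation: a field $\mathbb F$ with $t_1,\dots,t_n\in\mathbb F$, a ring map $\mathcal A_\hbar\to\mathbb F$, an $\mathbb F$-vector space $\mathbb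 V$ with a $\widehat H_n$-action in which $\mathcal A_\hbar$ acts through $\mathbb F$, a distinguished $\mathcal Y_{w_0}$ ($w_0$ longest in $S_n$) such that $\mathcal Y_w:=T_{w^{-1}w_0}\cdot\mathcal Y_{w_0}$ form a basis, and an $\mathbb F$-linear $\operatorname{ev}\colon\mathbb V\to\mathbb F$ with $\operatorname{ev}(\mathcal Y_w)\ne0\iff w=\mathrm{id}$ and $\operatorname{ev}(x_i\cdot\mathcal Y_w)=t_i\operatorname{ev}(\mathcal Y_w)$. *)

From HB Require Import structures.
From mathcomp Require Import all_boot all_order all_algebra all_fingroup.
Set Implicit Arguments. Unset Strict Implicit. Unset Printing Implicit Defensive.
Import GRing.Theory.
Local Open Scope ring_scope.

Section Schubert.
Variable n : nat.

(* generator indices: i : 'I_n.-1 stands for s_{i+1} = (i, i+1) (0-based) *)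
Lemma ordl_proof (i : 'I_n.-1) : (i < n)%N.
Proof. have := ltn_ord i; case: n i => [|m] i //= hi; exact: ltnW. Qed.
Lemma ordr_proof (i : 'I_n.-1) : (i.+1 < n)%N.
Proof. have := ltn_ord i; case: n i => [|m] i //=. Qed.

Definition ordl (i : 'I_n.-1) : 'I_n := Ordinal (ordl_proof i).
Definition ordr (i : 'I_n.-1) : 'I_n := Ordinal (ordr_proof i).

Definition sgen (i : 'I_n.-1) : 'S_n := tperm (ordl i) (ordr i).

Definition wordprod (s : seq 'I_n.-1) : 'S_n :=
  foldr (fun i w => (sgen i * w)%g) 1%g s.

Definition coxlen (w : 'S_n) : nat :=
  #|[set ij : 'I_n * 'I_n | (ij.1 < ij.2)%N && (w ij.2 < w ij.1)%N]|.

Definition w0 : 'S_n := perm (@rev_ord_inj n).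

Definition rword (w : 'S_n) : seq 'I_n.-1 :=
  match [pick t : (coxlen w).-tuple 'I_n.-1 | wordprod t == w] with
  | Some t => val t
  | None => [::]
  end.

Definition wordop (V : Type) (T : 'I_n.-1 -> V -> V) (s : seq 'I_n.-1) : V -> V :=
  foldr (fun i f => T i \o f) id s.

Definition Tperm (V : Type) (T : 'I_n.-1 -> V -> V) (w : 'S_n) : V -> V :=
  wordop T (rword w).

End Schubert.

Definition Tbar (F : fieldType) (V : lmodType F) n (p q : F)
  (T : 'I_n.-1 -> V -> V) : 'I_n.-1 -> V -> V :=
  fun i v => T i v + (p - q) *: v.

Definition Ycl (F : fieldType) (V : lmodType F) n
  (T : 'I_n.-1 -> V -> V) (Yw0 : V) (w : 'S_n) : V :=
  Tperm T ((w^-1) * w0 n)%g Yw0.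

(* By Matsumoto's theorem the operator of a reduced word depends only on its
   product, so T_i T_a = T_(s_i a) whenever s_i lengthens a, and the quadratic
   relation turns this into Tbar_i T_i = pq.  Hence Tbar_i sends T_a Y_w0 to
   T_(s_i a) Y_w0 + (p - q) T_a Y_w0 if s_i lengthens a, and to
   pq T_(s_i a) Y_w0 otherwise.  As ev kills T_a Y_w0 unless a = w0, induction
   along a reduced word of u gives ev (Tbar_u T_a Y_w0) = ev Y_id if
   a = u^-1 w0 and 0 otherwise: comparing descents of a and of u^-1 w0 rules
   out every other term.  With Y_v = T_(v^-1 w0) Y_w0 this is the duality
   ev (Tbar_u Y_v) = [u = v] ev Y_id, and the expansion of Y = sum_v c_v Y_v
   follows by applying it termwise. *)

From HB Require Import structures.
From mathcomp Require Import all_boot all_order all_algebra all_fingroup zify.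
Set Implicit Arguments. Unset Strict Implicit. Unset Printing Implicit Defensive.

Section Permutations.
Variable n : nat.
Implicit Types (i j : 'I_n.-1) (u w : 'S_n) (s t : seq 'I_n.-1).

Lemma ordl_neq_ordr i : ordl i != ordr i.
Proof. by rewrite -val_eqE /= neq_ltn ltnSn. Qed.

Lemma sgen_val i (x : 'I_n) :
  val (sgen i x) = if val x == i then i.+1 else if val x == i.+1 then val i else val x.
Proof.
rewrite /sgen; case: tpermP => [->|->|/eqP xl /eqP xr] /=; rewrite ?eqxx //.
  by rewrite ifN // neq_ltn ltnSn orbT.
by rewrite (val_eqE x (ordl i)) (val_eqE x (ordr i)) (negbTE xl) (negbTE xr).
Qed.

Lemma sgen_ltn i (a b : 'I_n) :
  (a < b)%N -> (a, b) != (ordl i, ordr i) -> (sgen i a < sgen i b)%N.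
Proof.
rewrite xpair_eqE -!val_eqE !sgen_val /= => ltab.
by do ![case: eqP => ? /=]; lia.
Qed.

Lemma sgen_fix i (z : 'I_n) : val z != i -> val z != i.+1 -> sgen i z = z.
Proof. by move=> zl zr; apply: val_inj; rewrite sgen_val (negbTE zl) (negbTE zr). Qed.

Lemma sgen_ordl i : sgen i (ordl i) = ordr i. Proof. exact: tpermL. Qed.
Lemma sgen_ordr i : sgen i (ordr i) = ordl i. Proof. exact: tpermR. Qed.
Lemma sgenV i : (sgen i)^-1%g = sgen i. Proof. exact: tpermV. Qed.
Lemma sgenK i w : (sgen i * (sgen i * w))%g = w.
Proof. by rewrite mulgA tperm2 mul1g. Qed.

Lemma sgen_commute i j : (i.+1 < j)%N || (j.+1 < i)%N -> commute (sgen i) (sgen j).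
Proof.
move=> far; rewrite /commute conjgC; congr (_ * _)%g.
rewrite /sgen tpermJ -/(sgen j) !sgen_fix //=; lia.
Qed.

Lemma sgen_braid i j : j = i.+1 :> nat ->
  (sgen i * sgen j * sgen i = sgen j * sgen i * sgen j)%g.
Proof.
move=> ji; have lr : ordl j = ordr i by apply: val_inj.
have conjE (k l : 'I_n.-1) : (sgen k * sgen l * sgen k = sgen l ^ sgen k)%g.
  by rewrite conjgE sgenV mulgA.
rewrite !conjE /sgen !tpermJ -/(sgen i) -/(sgen j) lr sgen_ordr -lr sgen_ordl.
by rewrite !sgen_fix //=; lia.
Qed.

(* Since [(sgen i * w) x = w (sgen i x)], this is exactly when left
   multiplication by [sgen i] shortens [w] (lemma [descentE]). *)
Definition descent w i := (w (ordr i) < w (ordl i))%N.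

Definition inversions w :=
  [set ij : 'I_n * 'I_n | (ij.1 < ij.2)%N && (w ij.2 < w ij.1)%N].

Lemma negb_descent w i : ~~ descent w i = (w (ordl i) < w (ordr i))%N.
Proof.
by rewrite /descent -leqNgt leq_eqVlt val_eqE (inj_eq perm_inj) (negbTE (ordl_neq_ordr i)).
Qed.

Lemma descent_sgenM w i : descent (sgen i * w) i = ~~ descent w i.
Proof. by rewrite negb_descent /descent !permM sgen_ordl sgen_ordr. Qed.

Lemma descent_mulw0 w i : descent (w * w0 n) i = ~~ descent w i.
Proof.
rewrite negb_descent /descent !permM !permE /=.
have := ltn_ord (w (ordl i)); have := ltn_ord (w (ordr i)); lia.
Qed.

Lemma card_inversions_sgenMD1 w i :
  #|inversions (sgen i * w) :\ (ordl i, ordr i)| = #|inversions w :\ (ordl i, ordr i)|.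
Proof.
set x0 := (ordl i, ordr i).
(* [(a, b) |-> (s_i a, s_i b)] injects the inversions of [u] other than [x0]
   into those of [s_i u]; apply this to [w] and to [s_i w]. *)
suff le u : (#|inversions u :\ x0| <= #|inversions (sgen i * u) :\ x0|)%N.
  by apply/eqP; rewrite eqn_leq le -{2}(sgenK i w) le.
pose phi ij := (sgen i ij.1, sgen i ij.2).
have phi_inj : injective phi by move=> [a b] [c d] [/perm_inj -> /perm_inj ->].
rewrite -(card_imset _ phi_inj); apply/subset_leq_card/subsetP => _ /imsetP[[a b] + ->].
rewrite !inE /= !permM !tpermK -/(sgen i) => /andP[ab0 /andP[ltab ->]].
rewrite sgen_ltn // /phi /= xpair_eqE andbT; apply: contraTN ltab => /andP[/eqP ea /eqP eb].
have sgenK1 x : sgen i (sgen i x) = x by apply: tpermK.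
by rewrite -(sgenK1 a) -(sgenK1 b) ea eb sgen_ordl sgen_ordr -leqNgt ltnW.
Qed.

Lemma coxlen_sgenM w i :
  (coxlen (sgen i * w) + descent w i = coxlen w + descent (sgen i * w) i)%N.
Proof.
rewrite /coxlen -!/(inversions _) (cardsD1 (ordl i, ordr i) (inversions w)).
rewrite (cardsD1 (ordl i, ordr i) (inversions (sgen i * w))) card_inversions_sgenMD1.
by rewrite !inE /= ltnSn /= -!/(descent _ i); lia.
Qed.

Lemma coxlen_sgenM_asc w i : ~~ descent w i -> coxlen (sgen i * w) = (coxlen w).+1.
Proof. by move=> asc; have := coxlen_sgenM w i; rewrite descent_sgenM (negbTE asc) /=; lia. Qed.

Lemma coxlen_sgenM_desc w i : descent w i -> (coxlen (sgen i * w)).+1 = coxlen w.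
Proof. by move=> desc; have := coxlen_sgenM w i; rewrite descent_sgenM desc /=; lia. Qed.

Lemma descentE w i : descent w i = (coxlen (sgen i * w) < coxlen w)%N.
Proof.
case: (boolP (descent w i)) => [/coxlen_sgenM_desc <- | /coxlen_sgenM_asc ->].
  by rewrite ltnSn.
by rewrite ltnNge leqnSn.
Qed.

Lemma coxlen_sgenM_le w i : (coxlen (sgen i * w) <= (coxlen w).+1)%N.
Proof. by have := coxlen_sgenM w i; lia. Qed.

Lemma descent_free_eq1 w : (forall i, ~~ descent w i) -> w = 1%g.
Proof.
move=> asc; have incr i : (w (ordl i) < w (ordr i))%N by rewrite -negb_descent.
have ge k (x : 'I_n) : x = k :> nat -> (k <= w x)%N.
  elim: k x => [//|k IH] x xk.
  have kn : (k < n.-1)%N by have := ltn_ord x; lia.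
  have := incr (Ordinal kn); have := IH (ordl (Ordinal kn)) erefl.
  have -> : ordr (Ordinal kn) = x by apply: val_inj.
  lia.
have le d (x : 'I_n) : (n.-1 - x)%N = d -> (w x <= x)%N.
  elim: d x => [|d IH] x xd; first by have := ltn_ord (w x); lia.
  have xn : (x < n.-1)%N by lia.
  have /IH : (n.-1 - ordr (Ordinal xn))%N = d by rewrite /=; lia.
  have := incr (Ordinal xn).
  have -> : ordl (Ordinal xn) = x by apply: val_inj.
  rewrite /=; lia.
apply/permP => x; apply: val_inj; rewrite perm1; apply/eqP.
by rewrite eqn_leq (le _ x erefl) (ge _ x erefl).
Qed.

Lemma exists_descent w : w != 1%g -> exists i, descent w i.
Proof.
move=> ne1; apply/existsP; apply: contraNT ne1 => /existsPn asc.
by apply/eqP/descent_free_eq1.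
Qed.

Lemma coxlen1 : coxlen (1%g : 'S_n) = 0%N.
Proof.
apply/eqP; rewrite cards_eq0; apply/eqP/setP => ij; rewrite !inE !perm1.
by case: ltngtP.
Qed.

Lemma coxlen_eq0 w : (coxlen w == 0%N) = (w == 1%g).
Proof.
apply/eqP/eqP => [w0|->]; last exact: coxlen1.
by case: (eqVneq w 1%g) => // /exists_descent [i /coxlen_sgenM_desc]; rewrite w0.
Qed.

Lemma wordprod_cat s t : wordprod (s ++ t) = (wordprod s * wordprod t)%g.
Proof. by elim: s => [|i s IH] /=; rewrite ?mul1g // IH mulgA. Qed.

Lemma wordop_cat (V : Type) (f : 'I_n.-1 -> V -> V) s t v :
  wordop f (s ++ t) v = wordop f s (wordop f t v).
Proof. by elim: s => [|i s IH] //=; rewrite IH. Qed.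

Lemma wordprod_rev s : wordprod (rev s) = (wordprod s)^-1%g.
Proof.
elim: s => [|i s IH]; first by rewrite /= invg1.
by rewrite rev_cons -cats1 wordprod_cat IH /= mulg1 invMg sgenV.
Qed.

Lemma coxlen_wordprod_le s : (coxlen (wordprod s) <= size s)%N.
Proof. by elim: s => [|i s IH] /=; rewrite ?coxlen1 // (leq_trans (coxlen_sgenM_le _ i)). Qed.

Lemma exists_reduced_word w : exists2 s, size s = coxlen w & wordprod s = w.
Proof.
move: {2}(coxlen w) (erefl (coxlen w)) => k; elim: k w => [|k IH] w wk.
  by exists [::] => //; apply/esym/eqP; rewrite -coxlen_eq0 wk.
have [i desc] : exists i, descent w i by apply: exists_descent; rewrite -coxlen_eq0 wk.
have [|s sk ws] := IH (sgen i * w)%g; first by have := coxlen_sgenM_desc desc; lia.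
by exists (i :: s); rewrite /= ?sk ?ws ?sgenK ?(coxlen_sgenM_desc desc).
Qed.

Lemma size_rword w : size (rword w) = coxlen w.
Proof.
rewrite /rword; case: pickP => [t _ | none]; first by rewrite size_tuple.
have [s sw ws] := exists_reduced_word w.
by have := none (Tuple (introT eqP sw)); rewrite /= ws eqxx.
Qed.

Lemma wordprod_rword w : wordprod (rword w) = w.
Proof.
rewrite /rword; case: pickP => [t /eqP // | none].
have [s sw ws] := exists_reduced_word w.
by have := none (Tuple (introT eqP sw)); rewrite /= ws eqxx.
Qed.

Lemma coxlenV w : coxlen w^-1%g = coxlen w.
Proof.
have le u : (coxlen u^-1%g <= coxlen u)%N.
  by rewrite -{1}(wordprod_rword u) -wordprod_rev -(size_rword u) -size_rev coxlen_wordprod_le.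
by apply/eqP; rewrite eqn_leq le -{1}(invgK w) le.
Qed.

Lemma coxlen_mul_le u w : (coxlen (u * w) <= coxlen u + coxlen w)%N.
Proof.
rewrite -{1}(wordprod_rword u) -{1}(wordprod_rword w) -wordprod_cat.
by rewrite (leq_trans (coxlen_wordprod_le _)) // size_cat !size_rword.
Qed.

Definition reduced s := coxlen (wordprod s) == size s.

Lemma reduced_rword w : reduced (rword w).
Proof. by rewrite /reduced wordprod_rword size_rword. Qed.

Lemma reduced_cat s t : reduced (s ++ t) -> reduced s && reduced t.
Proof.
rewrite /reduced wordprod_cat size_cat => /eqP red.
have := coxlen_mul_le (wordprod s) (wordprod t).
have := coxlen_wordprod_le s; have := coxlen_wordprod_le t; lia.
Qed.

Lemma reduced_cons i s : reduced (i :: s) -> reduced s /\ descent (wordprod (i :: s)) i.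
Proof.
move=> red; have /andP[_ rs] := reduced_cat (s := [:: i]) red.
by split=> //; rewrite descentE sgenK (eqP rs) (eqP red).
Qed.

Lemma size_reduced s t :
  reduced s -> reduced t -> wordprod s = wordprod t -> size s = size t.
Proof. by move=> /eqP <- /eqP <- ->. Qed.

Lemma reduced_sgen_cons u j r :
  reduced r -> wordprod r = (sgen j * u)%g -> descent u j -> reduced (j :: r).
Proof.
move=> /eqP rr ru desc; rewrite /reduced /= ru sgenK -rr ru.
by rewrite -(coxlen_sgenM_desc desc).
Qed.

Lemma descent_sgenM_far i j w : (i.+1 < j)%N || (j.+1 < i)%N ->
  descent (sgen i * w) j = descent w j.
Proof. by move=> far; rewrite /descent !permM !sgen_fix //=; lia. Qed.

Lemma descent_braid i j w : j = i.+1 :> nat -> descent w i -> descent w j ->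
  [/\ descent (sgen i * w) j, descent (sgen j * (sgen i * w)) i,
      descent (sgen j * w) i & descent (sgen i * (sgen j * w)) j].
Proof.
move=> ji; have lr : ordl j = ordr i by apply: val_inj.
have fl : sgen j (ordl i) = ordl i by rewrite sgen_fix //=; lia.
have fr : sgen i (ordr j) = ordr j by rewrite sgen_fix //=; lia.
have el : sgen j (ordr i) = ordr j by rewrite -lr sgen_ordl.
have er : sgen j (ordr j) = ordr i by rewrite sgen_ordr.
rewrite /descent !permM lr el fr (sgen_ordr i) fl (sgen_ordl i) er => wi wj.
by split; rewrite // (ltn_trans wj).
Qed.

Section Matsumoto.
Variables (V : Type) (T : 'I_n.-1 -> V -> V).
Hypothesis T_commute : forall i j v, (i.+1 < j)%N || (j.+1 < i)%N ->
  T i (T j v) = T j (T i v).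
Hypothesis T_braid : forall i j v, j = i.+1 :> nat ->
  T i (T j (T i v)) = T j (T i (T j v)).

Section Step.
Variable k : nat.
Hypothesis IH : forall s t, size s = k -> reduced s -> reduced t ->
  wordprod s = wordprod t -> wordop T s =1 wordop T t.
Variables (i j : 'I_n.-1) (s t : seq 'I_n.-1).
Hypotheses (sk : size s = k) (ris : reduced (i :: s)) (rjt : reduced (j :: t)).
Hypothesis e : wordprod (i :: s) = wordprod (j :: t).

Let w := wordprod (j :: t).
Let tk : size t = k. Proof. by have := size_reduced ris rjt e; rewrite /= sk => -[]. Qed.
Let ws : wordprod s = (sgen i * w)%g. Proof. by rewrite /w -e sgenK. Qed.
Let wt : wordprod t = (sgen j * w)%g. Proof. by rewrite /w sgenK. Qed.
Let rs : reduced s. Proof. by case: (reduced_cons ris). Qed.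
Let rt : reduced t. Proof. by case: (reduced_cons rjt). Qed.
Let di : descent w i. Proof. by rewrite /w -e; case: (reduced_cons ris). Qed.
Let dj : descent w j. Proof. by case: (reduced_cons rjt). Qed.

Lemma eq_wordop_cons_far : (i.+1 < j)%N || (j.+1 < i)%N ->
  wordop T (i :: s) =1 wordop T (j :: t).
Proof.
move=> far v; set x := (sgen j * (sgen i * w))%g.
have xE : (sgen i * (sgen j * w))%g = x by rewrite /x !mulgA (sgen_commute far).
have Es : wordop T s v = wordop T (j :: rword x) v.
  apply: IH => //; last by rewrite /= wordprod_rword sgenK ws.
  apply: (reduced_sgen_cons (u := sgen i * w)) (reduced_rword x) _ _.
    by rewrite wordprod_rword.
  by rewrite descent_sgenM_far.
have Et : wordop T t v = wordop T (i :: rword x) v.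
  apply: IH => //; last by rewrite /= wordprod_rword -xE sgenK wt.
  apply: (reduced_sgen_cons (u := sgen j * w)) (reduced_rword x) _ _.
    by rewrite wordprod_rword xE.
  by rewrite descent_sgenM_far // orbC.
by rewrite /= Es Et /= T_commute.
Qed.

Lemma eq_wordop_cons_braid : j = i.+1 :> nat -> wordop T (i :: s) =1 wordop T (j :: t).
Proof.
move=> ji v; have [dij djij dji diji] := descent_braid ji di dj.
set y := (sgen i * (sgen j * (sgen i * w)))%g.
have yE : (sgen j * (sgen i * (sgen j * w)))%g = y.
  by rewrite /y !mulgA (sgen_braid ji).
have Es : wordop T s v = wordop T (j :: i :: rword y) v.
  apply: IH => //; last by rewrite /= wordprod_rword /y !sgenK ws.
  apply: (reduced_sgen_cons (u := sgen i * w)) _ _ dij.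
    apply: (reduced_sgen_cons (u := sgen j * (sgen i * w))) (reduced_rword y) _ djij.
    by rewrite wordprod_rword.
  by rewrite /= wordprod_rword /y sgenK.
have Et : wordop T t v = wordop T (i :: j :: rword y) v.
  apply: IH => //; last by rewrite /= wordprod_rword -yE !sgenK wt.
  apply: (reduced_sgen_cons (u := sgen j * w)) _ _ dji.
    apply: (reduced_sgen_cons (u := sgen i * (sgen j * w))) (reduced_rword y) _ diji.
    by rewrite wordprod_rword yE.
  by rewrite /= wordprod_rword -yE sgenK.
by rewrite /= Es Et /= T_braid.
Qed.

End Step.

Theorem eq_wordop_reduced s t : reduced s -> reduced t -> wordprod s = wordprod t ->
  wordop T s =1 wordop T t.
Proof.
move: {2}(size s) (erefl (size s)) => k.
elim: k s t => [|k IH] [|i s] [|j t] //= sk rs rt e; try by have := size_reduced rs rt e.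
have [tk] := size_reduced rs rt e; case: sk => sk; rewrite sk in tk.
case: (ltngtP i j) => [ij | ji | /val_inj eij].
- have [ji | /eqP nji] := eqVneq (j : nat) i.+1.
    exact: (eq_wordop_cons_braid IH sk rs rt e ji).
  by apply: (eq_wordop_cons_far IH sk rs rt e); lia.
- have [ij | /eqP nij] := eqVneq (i : nat) j.+1.
    by move=> v; symmetry; exact: (eq_wordop_cons_braid IH (esym tk) rt rs (esym e) ij v).
  by apply: (eq_wordop_cons_far IH sk rs rt e); lia.
- subst j; have [rs' _] := reduced_cons rs; have [rt' _] := reduced_cons rt.
  by move=> v /=; rewrite (IH s t) //; apply: (mulgI (sgen i)).
Qed.

Lemma Tperm_sgenM i w v : ~~ descent w i -> T i (Tperm T w v) = Tperm T (sgen i * w) v.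
Proof.
move=> asc; have red : reduced (i :: rword w).
  apply: (reduced_sgen_cons (u := sgen i * w)) (reduced_rword w) _ _.
    by rewrite wordprod_rword sgenK.
  by rewrite descent_sgenM.
by apply: (eq_wordop_reduced red (reduced_rword _)); rewrite /= !wordprod_rword.
Qed.

End Matsumoto.

End Permutations.

Import GRing.Theory.
Local Open Scope ring_scope.

Section SchubertExpansion.
Variables (F : fieldType) (V : lmodType F) (n : nat) (p q : F).
Variable T : 'I_n.-1 -> {linear V -> V}.
Local Notation Tb := (Tbar p q (fun i => T i)).

Lemma wordop_linear (f : 'I_n.-1 -> V -> V) :
  (forall i, linear (f i)) -> forall s, linear (wordop f s).
Proof. by move=> f_lin; elim=> [|i s IH] a u v //=; rewrite IH f_lin. Qed.

Lemma Tbar_linear i : linear (Tb i).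
Proof.
by move=> a u v; rewrite /Tbar linearP !scalerDr !scalerA addrACA [a * _]mulrC.
Qed.

HB.instance Definition _ s := GRing.isLinear.Build F V V *:%R (wordop Tb s)
  (wordop_linear Tbar_linear s).
HB.instance Definition _ w := GRing.isLinear.Build F V V *:%R (Tperm Tb w)
  (wordop_linear Tbar_linear (rword w)).

Hypothesis T_quadratic : forall i v, T i (T i v - q *: v) + p *: (T i v - q *: v) = 0.
Hypothesis T_commute : forall (i j : 'I_n.-1) v, (i.+1 < j)%N || (j.+1 < i)%N ->
  T i (T j v) = T j (T i v).
Hypothesis T_braid : forall (i j : 'I_n.-1) v, val j = (val i).+1 ->
  T i (T j (T i v)) = T j (T i (T j v)).

Lemma Tbar_T i v : Tb i (T i v) = (p * q) *: v.
Proof.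
apply/subr0_eq; rewrite -(T_quadratic i v) !linearB !linearZ /= /Tbar.
by rewrite !scalerN scalerA scalerBl !addrA; congr (_ - _); apply: addrAC.
Qed.

Lemma Tbar_Tperm_asc i a v : ~~ descent a i ->
  Tb i (Tperm T a v) = Tperm T (sgen i * a) v + (p - q) *: Tperm T a v.
Proof. by move=> asc; rewrite /Tbar (Tperm_sgenM (T := fun i => T i) T_commute T_braid). Qed.

Lemma Tbar_Tperm_desc i a v : descent a i ->
  Tb i (Tperm T a v) = (p * q) *: Tperm T (sgen i * a) v.
Proof.
move=> desc; rewrite -{1}(sgenK i a) -(Tperm_sgenM (T := fun i => T i) T_commute T_braid).
  exact: Tbar_T.
by rewrite descent_sgenM desc.
Qed.

Variables (Yw0 : V) (ev : V -> F).
Hypothesis ev_linear : forall (a : F) (u v : V), ev (a *: u + v) = a * ev u + ev v.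
Hypothesis ev_Ycl_neq0 : forall w : 'S_n, (ev (Ycl T Yw0 w) != 0) = (w == 1%g).

HB.instance Definition _ := GRing.isLinear.Build F V F *%R ev ev_linear.

Local Notation E := (ev (Ycl T Yw0 1%g)).

Lemma ev_Tperm_Yw0 a : ev (Tperm T a Yw0) = if a == w0 n then E else 0.
Proof.
have := ev_Ycl_neq0 (a * (w0 n)^-1)^-1; rewrite /Ycl invgK mulgVK invg_eq1 divg_eq1.
by case: (a =P w0 n) => [-> | _ /negbFE/eqP //]; rewrite /Ycl invg1 mul1g.
Qed.

Lemma ev_Tbar_wordop s a : reduced s ->
  ev (wordop Tb s (Tperm T a Yw0)) = if a == ((wordprod s)^-1 * w0 n)%g then E else 0.
Proof.
elim/last_ind: s a => [|s i IH] a red; first by rewrite /= invg1 mul1g ev_Tperm_Yw0.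
have /andP[rs _] : reduced s && reduced [:: i] by apply: reduced_cat; rewrite cats1.
set u := wordprod s.
have usi : wordprod (rcons s i) = (u * sgen i)%g by rewrite -cats1 wordprod_cat /= mulg1.
have asc : ~~ descent u^-1 i.
  rewrite descentE -sgenV -invMg !coxlenV -usi (eqP red) (eqP rs) size_rcons.
  by rewrite ltnNge leqnSn.
(* [b] has a descent at [i] but [s_i b] has none: this kills the cross terms. *)
set b := (u^-1 * w0 n)%g.
have db : descent b i by rewrite descent_mulw0.
have eb : ((u * sgen i)^-1 * w0 n)%g = (sgen i * b)%g by rewrite invMg sgenV mulgA.
have sgen_eq x y : (sgen i * x == y)%g = (x == sgen i * y)%g.
  by apply/eqP/eqP => [<- | ->]; rewrite sgenK.
rewrite usi eb -cats1 wordop_cat /=.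
case: (boolP (descent a i)) => [desc | asc_a].
- rewrite Tbar_Tperm_desc // linearZ linearZ /= IH // sgen_eq.
  have -> : (a == sgen i * b)%g = false.
    by apply: contraTF desc => /eqP ->; rewrite descent_sgenM negbK.
  by rewrite mulr0.
- rewrite Tbar_Tperm_asc // !linearD !linearZ /= !IH // sgen_eq.
  have -> : (a == b) = false by apply: contraNF asc_a => /eqP ->.
  by rewrite mulr0 addr0.
Qed.

Lemma ev_Tbar_Ycl u v : ev (Tperm Tb u (Ycl T Yw0 v)) = if u == v then E else 0.
Proof.
rewrite /Tperm /Ycl ev_Tbar_wordop ?reduced_rword // wordprod_rword.
by rewrite (inj_eq (mulIg _)) eqg_inv eq_sym.
Qed.

Lemma ev_Tbar_sum (c : 'S_n -> F) w :
  ev (Tperm Tb w (\sum_v c v *: Ycl T Yw0 v)) = c w * E.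
Proof.
rewrite !linear_sum (bigD1 w) //= !linearZ /= ev_Tbar_Ycl eqxx big1 ?addr0 // => v wv.
by rewrite !linearZ /= ev_Tbar_Ycl eq_sym (negbTE wv) mulr0.
Qed.

Lemma Schubert_expansion (c : 'S_n -> F) (Y := \sum_v c v *: Ycl T Yw0 v) :
  Y = E^-1 *: \sum_w ev (Tperm Tb w Y) *: Ycl T Yw0 w.
Proof.
have E_neq0 : E != 0 by rewrite ev_Ycl_neq0.
rewrite scaler_sumr; apply: eq_bigr => w _.
by rewrite ev_Tbar_sum scalerA mulrCA mulVf ?mulr1.
Qed.

End SchubertExpansion.

Unset Implicit Arguments.

Theorem proposition3p7
  (F : fieldType) (Fchar0 : [pchar F] =i pred0)
  (p q hb : F) (n : nat) (t : 'I_n -> F)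
  (V : lmodType F)
  (T : 'I_n.-1 -> {linear V -> V}) (x : 'I_n -> {linear V -> V})
  (* Hecke quadratic relation (T_i + p)(T_i - q) = 0 *)
  (HTquad : forall i v, T i (T i v - q *: v) + p *: (T i v - q *: v) = 0)
  (* far commutation *)
  (HTcomm : forall (i j : 'I_n.-1) v, ((i.+1 < j)%N || (j.+1 < i)%N) ->
      T i (T j v) = T j (T i v))
  (* braid relation *)
  (HTbraid : forall (i j : 'I_n.-1) v, val j = (val i).+1 ->
      T i (T j (T i v)) = T j (T i (T j v)))
  (Hxcomm : forall i j v, x i (x j v) = x j (x i v))
  (HTx : forall (i : 'I_n.-1) (j : 'I_n) v, j != ordl i -> j != ordr i ->
      T i (x j v) = x j (T i v))
  (HTxi : forall (i : 'I_n.-1) v,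
      T i (x (ordl i) v) = x (ordr i) (T i v) + (hb *: v - (p - q) *: x (ordl i) v))
  (HTxi1 : forall (i : 'I_n.-1) v,
      T i (x (ordr i) v) = x (ordl i) (T i v) - (hb *: v - (p - q) *: x (ordl i) v))
  (Yw0 : V)
  (* the Y_w form a basis of V *)
  (Hfree : forall c : 'S_n -> F,
      \sum_(w : 'S_n) c w *: Ycl T Yw0 w = 0 -> forall w, c w = 0)
  (Hspan : forall v : V, exists c : 'S_n -> F,
      v = \sum_(w : 'S_n) c w *: Ycl T Yw0 w)
  (ev : V -> F)
  (Hev_lin : forall (a : F) (u v : V), ev (a *: u + v) = a * ev u + ev v)
  (Hev_Y : forall w : 'S_n, (ev (Ycl T Yw0 w) != 0) = (w == 1%g))
  (Hev_x : forall (i : 'I_n) (w : 'S_n),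
      ev (x i (Ycl T Yw0 w)) = t i * ev (Ycl T Yw0 w)) :
  (forall u v : 'S_n,
     ev (Tperm (Tbar p q (fun i => T i)) u (Ycl T Yw0 v)) =
       (if u == v then ev (Ycl T Yw0 1%g) else 0))
  /\
  (forall Y : V,
     Y = (ev (Ycl T Yw0 1%g))^-1 *:
           \sum_(w : 'S_n) ev (Tperm (Tbar p q (fun i => T i)) w Y) *: Ycl T Yw0 w).
Proof.
split=> [u v | Y]; first exact: (ev_Tbar_Ycl HTquad HTcomm HTbraid Hev_lin Hev_Y).
have [c ->] := Hspan Y.
exact: (Schubert_expansion HTquad HTcomm HTbraid Hev_lin Hev_Y).
Qed.
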